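(* Consider the problems LGopt and QEPmin defined in the context. (1) Let $(\lambda_*,u_* )$ be a minimizer of LGopt. Then there exists $z_*$ such that $(\lambda_*,z_* )$ is a minimizer of QEPmin; specifically, one may take $z_*=(PAP-\lambda_* I)^{\dagger}u_*$ if either $\lambda_*\notin\operatorname{eig}(PAP)$, or $\lambda_*\in\operatorname{eig}(PAP)$ but there is no corresponding eigenvector of $PAP$ lying in $\mathcal N(C^{\top})$; and $z_*=s$ if $\lambda_*\in\operatorname{eig}(PAP)$ and $s\in\mathcal N(C^{\top})$ is a corresponding eigenvector of $PAP$. (2) Let $(\lambda_*,z_* )$ be a minimizer of QEPmin. Then there exists $u_*\in\mathbb{R}^n$ such that $(\lambda_*,u_* )$ is a minimizer of LGopt; specifically, $u_*=-\frac{\gamma^2}{b_0^{\top}z_*}(PAP-\lambda_* I)z_*$ if $b_0^{\top}z_*\neq 0$, and $u_*=x_*+\sqrt{\gamma^2-\|x_*\|^2}\,\frac{z_*}{\|z_*\|}$ if $b_0^{\top}z_*=0$, where in the latter case $x_*=-(PAP-\lambda_* I)^{\dagger}b_0$, and it is guaranteed that $\|x_*\|\le\gamma$.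
   Context: Let $A\in\mathbb{R}^{n\times n}$ be symmetric, $C\in\mathbb{R}^{n\times m}$ ($m<n$) have full column rank, and $b\in\mathbb{R}^m$. Let $n_0=(C^{\top})^{\dagger}b=C(C^{\top}C)^{-1}b$; assume $\|n_0\|<1$ and set $\gamma=\sqrt{1-\|n_0\|^2}>0$. Let $P=I-C(C^{\top}C)^{-1}C^{\top}$ (the orthogonal projector onto the null space $\mathcal N(C^{\top})$) and $b_0=PAn_0$; assume $b_0\neq 0$. $X^\dagger$ is the Moore–Penrose inverse, $\operatorname{eig}(\cdot)$ the set of eigenvalues, norms are Euclidean. LGopt: minimize $\lambda$ over pairs $(\lambda,u)\in\mathbb{R}\times\mathbb{R}^n$ satisfying $(PAP-\lambda I)u=-b_0$, $\|u\|=\gamma$, $u\in\mathcal N(C^{\top})$; a minimizer is a feasible pair with the smallest $\lambda$. QEPmin: minimize $\lambda$ over pairs $(\lambda,z)$ with $\lambda\in\mathbb{R}$, $0\neq z\in\mathcal N(C^{\top})$ and $(PAP-\lambda I)^2z=\gamma^{-2}b_0b_0^{\top}z$; a minimizer is a feasible pair with the smallest $\lambda$. *)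

From mathcomp Require Import all_boot all_order all_algebra.
Set Implicit Arguments. Unset Strict Implicit. Unset Printing Implicit Defensive.
Import Order.TTheory GRing.Theory Num.Theory.
Local Open Scope ring_scope.

Section Defs.
Variable R : rcfType.

Definition dotv (k : nat) (u v : 'cV[R]_k) : R := (u^T *m v) 0 0.
Definition vnorm (k : nat) (u : 'cV[R]_k) : R := Num.sqrt (dotv u u).

Definition is_pinv (k : nat) (M X : 'M[R]_k) : Prop :=
  [/\ M *m X *m M = M, X *m M *m X = X,
      (M *m X)^T = M *m X & (X *m M)^T = X *m M].

Variables (n m : nat) (A : 'M[R]_n) (C : 'M[R]_(n, m)) (b : 'cV[R]_m).

Definition n0v : 'cV[R]_n := C *m invmx (C^T *m C) *m b.
Definition gam : R := Num.sqrt (1 - vnorm n0v ^+ 2).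
Definition Pmx : 'M[R]_n := 1%:M - C *m invmx (C^T *m C) *m C^T.
Definition b0v : 'cV[R]_n := Pmx *m A *m n0v.
Definition PAP : 'M[R]_n := Pmx *m A *m Pmx.
Definition shiftM (l : R) : 'M[R]_n := PAP - l%:M.
Definition inNull (u : 'cV[R]_n) : Prop := C^T *m u = 0.

Definition is_eigvec (M : 'M[R]_n) (l : R) (s : 'cV[R]_n) : Prop :=
  s != 0 /\ M *m s = l *: s.

Definition LG_feasible (l : R) (u : 'cV[R]_n) : Prop :=
  [/\ shiftM l *m u = - b0v, vnorm u = gam & inNull u].
Definition LG_minimizer (l : R) (u : 'cV[R]_n) : Prop :=
  LG_feasible l u /\ forall l' u', LG_feasible l' u' -> l <= l'.

Definition QEP_feasible (l : R) (z : 'cV[R]_n) : Prop :=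
  [/\ z != 0, inNull z &
      shiftM l *m (shiftM l *m z) = gam ^- 2 *: (b0v *m b0v^T *m z)].
Definition QEP_minimizer (l : R) (z : 'cV[R]_n) : Prop :=
  QEP_feasible l z /\ forall l' z', QEP_feasible l' z' -> l <= l'.
End Defs.

From mathcomp Require Import all_boot all_order all_algebra.
From mathcomp Require Import ring lra.
From Stdlib Require Import Classical.
Set Implicit Arguments. Unset Strict Implicit. Unset Printing Implicit Defensive.
Import Order.TTheory GRing.Theory Num.Theory.
Local Open Scope ring_scope.

(* Both problems only involve the compression [H = PAP] of [A] to the range of
   the orthogonal projector [P] onto N(C^T), which contains [b0].  An LG point
   (l, u) gives a QEP point at the same l: either [u = (H - l) z] for some [z] in
   the range, or [H - l] has a null vector there.  Conversely a QEP point (l, z)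
   with [b0^T z <> 0] rescales to the LG point [-(g^2 / b0^T z) (H - l) z]; if
   [b0^T z = 0] then [z] is a null vector of [H - l], and any solution [x] of
   [(H - l) x = -b0] in the range with [|x| <= g] extends along [z] to an LG
   point at l (the pseudo-inverse produces the minimum-norm such [x]).
   Such an [x] exists unless LG is feasible strictly below l: write the solution
   of [(H - l) x = -b0] as [w(l) / q(l)] with polynomial entries without common
   roots (adjugate formula, then cancellation).  The polynomial
   [|w|^2 - g^2 q^2] has the sign of [|x(l)|^2 - g^2]; it is negative far to the
   left, where [H - l] is coercive, so by the intermediate value theorem it
   either vanishes below l or is nonpositive at l.  Hence every QEP-feasible l
   is bounded below by the least LG-feasible one, and the minimizers agree. *)

Section DotProduct.
Variables (R : rcfType) (k : nat).
Implicit Types (u v w : 'cV[R]_k) (Q : 'M[R]_k).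

Lemma dotvE u v : dotv u v = \sum_i u i 0 * v i 0.
Proof. by rewrite /dotv mxE; apply: eq_bigr => i _; rewrite mxE. Qed.

Lemma dotvC u v : dotv u v = dotv v u.
Proof. by rewrite !dotvE; apply: eq_bigr => i _; exact: mulrC. Qed.

Lemma dotvDl u v w : dotv (u + v) w = dotv u w + dotv v w.
Proof. by rewrite !dotvE -big_split; apply: eq_bigr => i _; rewrite mxE mulrDl. Qed.

Lemma dotvDr u v w : dotv w (u + v) = dotv w u + dotv w v.
Proof. by rewrite dotvC dotvDl !(dotvC w). Qed.

Lemma dotvZl a u v : dotv (a *: u) v = a * dotv u v.
Proof. by rewrite !dotvE mulr_sumr; apply: eq_bigr => i _; rewrite mxE mulrA. Qed.

Lemma dotvZr a u v : dotv v (a *: u) = a * dotv v u.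
Proof. by rewrite dotvC dotvZl dotvC. Qed.

Lemma dotvNl u v : dotv (- u) v = - dotv u v.
Proof. by rewrite -scaleN1r dotvZl mulN1r. Qed.

Lemma dotvNr u v : dotv v (- u) = - dotv v u.
Proof. by rewrite -scaleN1r dotvZr mulN1r. Qed.

Lemma dotv0r u : dotv u 0 = 0.
Proof. by rewrite dotvE big1 // => i _; rewrite mxE mulr0. Qed.

Lemma dotv0l u : dotv 0 u = 0.
Proof. by rewrite dotvC dotv0r. Qed.

Lemma dotv_mulmx Q u v : dotv u (Q *m v) = dotv (Q^T *m u) v.
Proof. by rewrite /dotv trmx_mul trmxK mulmxA. Qed.

Lemma dotv_ge0 u : 0 <= dotv u u.
Proof. by rewrite dotvE; apply: sumr_ge0 => i _; rewrite -expr2 sqr_ge0. Qed.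

Lemma dotv_eq0 u : dotv u u = 0 -> u = 0.
Proof.
rewrite dotvE => /psumr_eq0P u2_eq0; apply/matrixP => i j; rewrite ord1 mxE.
by apply/eqP; rewrite -sqrf_eq0 expr2 u2_eq0 // => l _; rewrite -expr2 sqr_ge0.
Qed.

Lemma dotv_gt0 u : u != 0 -> 0 < dotv u u.
Proof.
move=> u_neq0; rewrite lt_def dotv_ge0 andbT.
by apply: contra u_neq0 => /eqP/dotv_eq0->.
Qed.

Lemma vnorm_sq u : vnorm u ^+ 2 = dotv u u.
Proof. by rewrite /vnorm sqr_sqrtr // dotv_ge0. Qed.

Lemma vnorm_eq u r : 0 <= r -> vnorm u = r <-> dotv u u = r ^+ 2.
Proof.
move=> r_ge0; split=> [<-|uu]; first by rewrite vnorm_sq.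
by rewrite /vnorm uu sqrtr_sqr ger0_norm.
Qed.

Lemma vnorm_le u r : 0 <= r -> (vnorm u <= r) = (dotv u u <= r ^+ 2).
Proof. by move=> r_ge0; rewrite -vnorm_sq ler_pXn2r // nnegrE sqrtr_ge0. Qed.

Lemma dotv_orthD u v : dotv u v = 0 -> dotv (u + v) (u + v) = dotv u u + dotv v v.
Proof. by move=> uv; rewrite !dotvDl !dotvDr (dotvC v u) uv addr0 add0r. Qed.

Lemma outer_mulmx u v w : u *m v^T *m w = dotv v w *: u.
Proof. by rewrite -mulmxA [v^T *m w]mx11_scalar mul_mx_scalar. Qed.

Lemma dotv_mulmx_ge Q v : - (\sum_i \sum_j `|Q i j|) * dotv v v <= dotv v (Q *m v).
Proof.
have -> : dotv v (Q *m v) = \sum_i \sum_j v i 0 * Q i j * v j 0.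
  rewrite dotvE; apply: eq_bigr => i _; rewrite mxE mulr_sumr.
  by apply: eq_bigr => j _; rewrite mulrA.
rewrite mulNr mulr_suml -sumrN; apply: ler_sum => i _.
rewrite mulr_suml -sumrN; apply: ler_sum => j _.
have coord_le l : `|v l 0| ^+ 2 <= dotv v v.
  rewrite real_normK ?num_real // dotvE (bigD1 l) //= expr2 lerDl.
  by apply: sumr_ge0 => l' _; rewrite -expr2 sqr_ge0.
have vivj : `|v i 0| * `|v j 0| <= dotv v v.
  have := coord_le i; have := coord_le j.
  have := normr_ge0 (v i 0); have := normr_ge0 (v j 0); nra.
apply: lerNnormlW; rewrite !normrM; have := normr_ge0 (Q i j); nra.
Qed.

Lemma pinv_orth_ker (M X : 'M[R]_k) v w :
  is_pinv M X -> M *m w = 0 -> dotv w (X *m v) = 0.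
Proof.
case=> _ XMX _ XM_sym Mw0.
by rewrite -XMX -mulmxA dotv_mulmx XM_sym -mulmxA Mw0 mulmx0 dotv0l.
Qed.

End DotProduct.

Lemma nonunitmx_ker (F : fieldType) k (N : 'M[F]_k) :
  N \notin unitmx -> exists2 s : 'cV[F]_k, s != 0 & N *m s = 0.
Proof.
rewrite unitmxE unitfE negbK -det_tr => /det0P [v v_neq0 vN].
exists v^T; first by rewrite trmx_eq0.
by rewrite -[N]trmxK -trmx_mul vN trmx0.
Qed.

Lemma reduce_common_roots (F : fieldType) k p (N : 'M[{poly F}]_(k, p))
    (y : 'cV[{poly F}]_k) (w : 'cV[{poly F}]_p) (q : {poly F}) :
  q != 0 -> N *m w = q *: y ->
  exists w' q', [/\ q' != 0, N *m w' = q' *: y &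
    forall l, q'.[l] = 0 -> map_mx (horner_eval l) w' != 0].
Proof.
move: {2}(size q) (leqnn (size q)) => s; elim: s w q => [|s IH] w q q_size q_neq0 Nw.
  by move: q_size; rewrite leqn0 size_poly_eq0 (negPf q_neq0).
have [[l [ql wl]]|no_common] :=
  classic (exists l, q.[l] = 0 /\ map_mx (horner_eval l) w = 0); last first.
  by exists w, q; split=> // l ql; apply/eqP => wl; apply: no_common; exists l.
pose d := 'X - l%:P; pose w' := map_mx (fun r => r %/ d) w.
have d_neq0 : d != 0 by rewrite polyXsubC_eq0.
have d_q : d %| q by rewrite dvdp_XsubCl rootE ql.
have w_eq : w = d *: w'.
  apply/matrixP => i j; rewrite !mxE mulrC divpK // dvdp_XsubCl rootE.
  by move/matrixP: wl => /(_ i j); rewrite !mxE horner_evalE => ->.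
have q_eq : q = d * (q %/ d) by rewrite mulrC divpK.
apply: (IH w' (q %/ d)).
- by rewrite size_divp // size_XsubC leq_subLR add1n.
- by apply: contraNneq q_neq0 => q'0; rewrite q_eq q'0 mulr0.
- move: Nw; rewrite w_eq {1}q_eq -scalemxAr -scalerA => /matrixP Nw.
  by apply/matrixP => i j; move: (Nw i j); rewrite !mxE; apply: mulfI.
Qed.

Definition minimizing (R : numDomainType) (T : Type) (F : R -> T -> Prop) l x :=
  F l x /\ forall l' x', F l' x' -> l <= l'.

Lemma minimizing_iff (R : numDomainType) (T : Type) (F G : R -> T -> Prop) l x :
  (forall l x, F l x <-> G l x) -> minimizing F l x <-> minimizing G l x.
Proof.
move=> FG; split=> -[/FG x_feas x_min]; split=> // l' x' /FG; exact: x_min.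
Qed.

(* [H], [P], [c], [g] stand for [PAP], the projector onto N(C^T), [b0] and [gam]. *)
Record compressed (R : rcfType) n (H P : 'M[R]_n) (c : 'cV[R]_n) (g : R) : Prop :=
  Compressed {
    compressed_H_sym : H^T = H;
    compressed_P_sym : P^T = P;
    compressed_P_idem : P *m P = P;
    compressed_PH : P *m H = H;
    compressed_Pc : P *m c = c;
    compressed_g_gt0 : 0 < g }.

Section Compressed.
Variables (R : rcfType) (n : nat) (H P : 'M[R]_n) (c : 'cV[R]_n) (g : R).
Hypothesis data : compressed H P c g.
Implicit Types (l : R) (u v x z s : 'cV[R]_n).

Let H_sym := compressed_H_sym data.
Let P_sym := compressed_P_sym data.
Let P_idem := compressed_P_idem data.
Let PH := compressed_PH data.
Let Pc := compressed_Pc data.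
Let g_gt0 := compressed_g_gt0 data.
Let g_neq0 : g != 0 := lt0r_neq0 g_gt0.
Let HP : H *m P = H. Proof. by rewrite -[in LHS]H_sym -P_sym -trmx_mul PH. Qed.

Local Notation M l := (H - l%:M).

Definition lg_feasible l u := [/\ M l *m u = - c, dotv u u = g ^+ 2 & P *m u = u].
Definition qep_feasible l z :=
  [/\ z != 0, P *m z = z & M l *m (M l *m z) = g ^- 2 *: (c *m c^T *m z)].
Definition null_vec l s := [/\ s != 0, P *m s = s & M l *m s = 0].
Definition subsolution l x := [/\ M l *m x = - c, P *m x = x & dotv x x <= g ^+ 2].

Lemma dotv_shift l u v : dotv u (M l *m v) = dotv (M l *m u) v.
Proof. by rewrite dotv_mulmx linearB /= H_sym tr_scalar_mx. Qed.

Lemma shift_commP l : P *m M l = M l *m P.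
Proof. by rewrite mulmxBr mulmxBl PH HP mul_mx_scalar mul_scalar_mx. Qed.

Lemma shift_rangeP l u : P *m u = u -> P *m (M l *m u) = M l *m u.
Proof. by move=> Pu; rewrite mulmxA shift_commP -mulmxA Pu. Qed.

(* [shiftI l] is [H - l] on the range of [P] and the identity on its kernel: it is
   invertible iff [H - l] has no null vector in the range of [P], and it is
   polynomial in [l]. *)
Definition shiftI l := H + (1%:M - P) - l *: P.

Lemma shiftI_rangeP l u : P *m u = u -> shiftI l *m u = M l *m u.
Proof.
move=> Pu; rewrite mulmxDl mulmxDl mulmxBl mul1mx Pu subrr addr0 mulNmx -scalemxAl Pu.
by rewrite mulmxBl mul_scalar_mx.
Qed.

Lemma shiftI_solve l u v : P *m v = v -> shiftI l *m u = v -> P *m u = u.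
Proof.
move=> Pv Iu.
have QP : (1%:M - P) *m P = 0 by rewrite mulmxBl mul1mx P_idem subrr.
have QI : (1%:M - P) *m shiftI l = 1%:M - P.
  rewrite /shiftI mulmxDr mulmxDr mulmxN -scalemxAr QP scaler0 oppr0 addr0.
  by rewrite mulmxBl mul1mx PH subrr add0r mulmxBr mulmx1 QP subr0.
have : (1%:M - P) *m u = 0 by rewrite -QI -mulmxA Iu mulmxBl mul1mx Pv subrr.
by rewrite mulmxBl mul1mx => /eqP; rewrite subr_eq0 => /eqP <-.
Qed.

Lemma null_vec_or_onto l : (exists s, null_vec l s) \/
  forall v, P *m v = v -> exists2 z, P *m z = z & M l *m z = v.
Proof.
have [I_unit|/nonunitmx_ker [s s_neq0 Is]] := boolP (shiftI l \in unitmx); [right|left].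
  move=> v Pv; pose z := invmx (shiftI l) *m v.
  have Iz : shiftI l *m z = v by rewrite mulmxA mulmxV // mul1mx.
  have Pz := shiftI_solve Pv Iz.
  by exists z; rewrite // -shiftI_rangeP.
have Ps : P *m s = s by apply: (@shiftI_solve l s 0); rewrite ?mulmx0.
by exists s; split; rewrite // -shiftI_rangeP.
Qed.

Lemma qep_of_lg_preimage l u z :
  lg_feasible l u -> P *m z = z -> M l *m z = u -> qep_feasible l z.
Proof.
case=> Mu uu _ Pz Mz; split=> //.
  apply/eqP => z0; move: uu; rewrite -Mz z0 mulmx0 dotv0r => /esym/eqP.
  by rewrite sqrf_eq0 (negPf g_neq0).
have cz : dotv c z = - g ^+ 2 by rewrite -[c]opprK -Mu dotvNl -dotv_shift Mz uu.
by rewrite Mz Mu outer_mulmx cz scalerA mulrN mulVf ?sqrf_eq0 // scaleN1r.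
Qed.

Lemma qep_of_null_vec l u s : lg_feasible l u -> null_vec l s -> qep_feasible l s.
Proof.
case=> Mu _ _ [s_neq0 Ps Ms]; split=> //.
have cs : dotv c s = 0 by rewrite -[c]opprK -Mu dotvNl -dotv_shift Ms dotv0r oppr0.
by rewrite Ms mulmx0 outer_mulmx cs scale0r scaler0.
Qed.

Lemma qep_of_lg l u : lg_feasible l u -> exists z, qep_feasible l z.
Proof.
move=> u_feas; have [[s s_null]|onto] := null_vec_or_onto l.
  by exists s; apply: qep_of_null_vec u_feas s_null.
case: (u_feas) => _ _ Pu; have [z Pz Mz] := onto u Pu.
by exists z; apply: qep_of_lg_preimage u_feas Pz Mz.
Qed.

Lemma lg_of_qep l z : qep_feasible l z -> dotv c z != 0 ->
  lg_feasible l ((- (g ^+ 2 / dotv c z)) *: (M l *m z)).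
Proof.
case=> _ Pz MMz cz; rewrite outer_mulmx in MMz; split.
- rewrite -scalemxAr MMz !scalerA -[RHS]scaleN1r; congr (_ *: _).
  by field; rewrite cz g_neq0.
- rewrite dotvZl dotvZr dotv_shift MMz !dotvZl.
  by field; rewrite cz g_neq0.
- by rewrite -scalemxAr shift_rangeP.
Qed.

Lemma null_vec_of_qep l z : qep_feasible l z -> dotv c z = 0 -> null_vec l z.
Proof.
case=> z_neq0 Pz MMz cz; split=> //; apply: dotv_eq0.
by rewrite -dotv_shift MMz outer_mulmx cz scale0r scaler0 dotv0r.
Qed.

Lemma lg_of_subsolution_orth l x s : subsolution l x -> null_vec l s -> dotv x s = 0 ->
  lg_feasible l (x + (Num.sqrt (g ^+ 2 - dotv x x) / vnorm s) *: s).
Proof.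
case=> Mx Px xx [s_neq0 Ps Ms] xs; split.
- by rewrite mulmxDr -scalemxAr Ms scaler0 addr0.
- have vs_neq0 : vnorm s != 0 by rewrite -sqrf_eq0 vnorm_sq gt_eqF ?dotv_gt0.
  rewrite dotv_orthD; last by rewrite dotvZr xs mulr0.
  rewrite dotvZl dotvZr mulrA -expr2 -(vnorm_sq s) exprMn sqr_sqrtr ?subr_ge0 //.
  by field.
- by rewrite mulmxDr -scalemxAr Ps Px.
Qed.

Lemma lg_of_subsolution l x s : subsolution l x -> null_vec l s ->
  exists u, lg_feasible l u.
Proof.
case=> Mx Px xx s_null; have [s_neq0 Ps Ms] := s_null.
have ss_neq0 : dotv s s != 0 by rewrite gt_eqF ?dotv_gt0.
pose a := dotv s x / dotv s s; pose y := x - a *: s.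
have ys : dotv y s = 0 by rewrite dotvDl dotvNl dotvZl (dotvC x s) divfK // subrr.
have yy : dotv y y <= dotv x x.
  have -> : x = y + a *: s by rewrite subrK.
  rewrite dotv_orthD; last by rewrite dotvZr ys mulr0.
  by rewrite lerDl dotvZl dotvZr mulrA mulr_ge0 ?dotv_ge0 // -expr2 sqr_ge0.
have y_sub : subsolution l y.
  split; last exact: le_trans yy xx.
  - by rewrite mulmxBr -scalemxAr Ms scaler0 subr0.
  - by rewrite mulmxBr -scalemxAr Ps Px.
by eexists; apply: lg_of_subsolution_orth y_sub s_null ys.
Qed.

Definition entry_sum := \sum_i \sum_j `|H i j|.

Lemma shift_sol_bound l v e : l < - entry_sum -> M l *m v = e ->
  (- entry_sum - l) ^+ 2 * dotv v v <= dotv e e.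
Proof.
move=> l_lt Mv; set k := - entry_sum - l.
have k_gt0 : 0 < k by rewrite subr_gt0.
have coercive : k * dotv v v <= dotv v e.
  rewrite -Mv mulmxBl mul_scalar_mx dotvDr dotvNr dotvZr mulrBl.
  by apply: lerB => //; apply: dotv_mulmx_ge.
have := dotv_ge0 (e - k *: v).
rewrite !dotvDl !dotvDr !dotvNl !dotvNr !dotvZl !dotvZr (dotvC e v).
have := dotv_ge0 v; nra.
Qed.

Lemma shiftI_inj l v : l < - entry_sum -> shiftI l *m v = 0 -> v = 0.
Proof.
move=> l_lt Iv; have Pv : P *m v = v by apply: (@shiftI_solve l v 0); rewrite ?mulmx0.
have Mv : M l *m v = 0 by rewrite -shiftI_rangeP.
have := shift_sol_bound l_lt Mv.
rewrite dotv0r pmulr_rle0 ?exprn_gt0 ?subr_gt0 // => vv; apply: dotv_eq0.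
by apply/eqP; rewrite eq_le vv dotv_ge0.
Qed.

Lemma far_left_point mu : exists l1, [/\ l1 < mu, l1 < - entry_sum &
  forall v, M l1 *m v = - c -> dotv v v < g ^+ 2].
Proof.
set E := entry_sum; set cc := dotv c c.
have g2_gt0 : 0 < g ^+ 2 by rewrite exprn_gt0.
have cc_g2 : 0 <= cc / g ^+ 2 by rewrite divr_ge0 ?dotv_ge0 // ltW.
pose k := 1 + `|E| + `|mu| + cc / g ^+ 2.
have k_ge1 : 1 <= k by rewrite /k; have := normr_ge0 E; have := normr_ge0 mu; lra.
have cc_lt : cc < k ^+ 2 * g ^+ 2.
  have : cc < k * g ^+ 2.
    rewrite -ltr_pdivrMr // /k; have := normr_ge0 E; have := normr_ge0 mu; lra.
  move/lt_le_trans; apply; apply: ler_wpM2r; first exact: ltW.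
  by rewrite expr2; nra.
have k_gt0 : 0 < k := lt_le_trans ltr01 k_ge1.
have l1_lt : - E - k < - E by rewrite ltrBlDr ltrDl.
exists (- E - k); split=> // [|v Mv].
  have := ler_norm (- E); rewrite normrN; have := lerNnormlW (lexx `|mu|).
  by rewrite /k; lra.
have := shift_sol_bound l1_lt Mv.
have -> : - E - (- E - k) = k by ring.
rewrite dotvNl dotvNr opprK => vv.
by rewrite -(ltr_pM2l (exprn_gt0 2 k_gt0)); apply: le_lt_trans vv cc_lt.
Qed.

Definition shiftIX : 'M[{poly R}]_n :=
  map_mx polyC (H + (1%:M - P)) - 'X *: map_mx polyC P.

Lemma shiftIX_eval l : map_mx (horner_eval l) shiftIX = shiftI l.
Proof. by apply/matrixP => i j; rewrite !mxE /horner_eval !hornerE mulrC. Qed.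

Section Secular.
Variables (w : 'cV[{poly R}]_n) (q : {poly R}).
Hypotheses (shiftIX_w : shiftIX *m w = q *: map_mx polyC (- c))
  (no_common_root : forall l, q.[l] = 0 -> map_mx (horner_eval l) w != 0).

Local Notation w_at l := (map_mx (horner_eval l) w).
Local Notation x_at l := (q.[l]^-1 *: w_at l).

Lemma shiftI_w_at l : shiftI l *m w_at l = q.[l] *: - c.
Proof.
rewrite -shiftIX_eval -map_mxM shiftIX_w map_mxZ; congr (_ *: _).
by apply/matrixP => i j; rewrite !mxE; exact: hornerC.
Qed.

Lemma x_at_sol l : q.[l] != 0 -> M l *m x_at l = - c /\ P *m x_at l = x_at l.
Proof.
move=> ql; have Pw : P *m w_at l = w_at l.
  by apply: shiftI_solve (shiftI_w_at l); rewrite -scalemxAr mulmxN Pc.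
split; last by rewrite -scalemxAr Pw.
by rewrite -scalemxAr -shiftI_rangeP // shiftI_w_at scalerA mulVf // scale1r.
Qed.

Definition secular := \sum_i w i 0 ^+ 2 - (g ^+ 2)%:P * q ^+ 2.

Lemma secular_eval l : secular.[l] = dotv (w_at l) (w_at l) - g ^+ 2 * q.[l] ^+ 2.
Proof.
rewrite /secular hornerD hornerN horner_sum hornerCM horner_exp dotvE; congr (_ - _).
by apply: eq_bigr => i _; rewrite horner_exp !mxE expr2.
Qed.

Lemma secular_le0 l : secular.[l] <= 0 -> q.[l] != 0.
Proof.
rewrite secular_eval; apply: contraTneq => ql.
rewrite ql expr0n mulr0 subr0 -ltNge dotv_gt0 //; exact: no_common_root.
Qed.

Lemma secular_x_at l : q.[l] != 0 ->
  secular.[l] = q.[l] ^+ 2 * (dotv (x_at l) (x_at l) - g ^+ 2).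
Proof. by move=> ql; rewrite secular_eval dotvZl dotvZr; field. Qed.

Lemma secular_alternative mu : (exists2 l0, l0 < mu & exists u, lg_feasible l0 u) \/
  exists x0, subsolution mu x0.
Proof.
have [l1 [l1_mu l1_E l1_small]] := far_left_point mu.
have q2_gt0 l : q.[l] != 0 -> 0 < q.[l] ^+ 2.
  by move=> ql; rewrite lt_def sqr_ge0 sqrf_eq0 ql.
have ql1 : q.[l1] != 0.
  apply/eqP => ql1; move/negP: (no_common_root ql1); apply; apply/eqP.
  by apply: (shiftI_inj l1_E); rewrite shiftI_w_at ql1 scale0r.
have sec_l1 : secular.[l1] < 0.
  have [Mx _] := x_at_sol ql1.
  by rewrite secular_x_at // pmulr_rlt0 ?q2_gt0 // subr_lt0 (l1_small _ Mx).
have [sec_mu|sec_mu] := ltrP 0 secular.[mu]; [left|right].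
  have sign_change : secular.[l1] <= 0 <= secular.[mu] by rewrite !ltW.
  have [x /andP[_ x_mu] /rootP sec_x] := poly_ivt (ltW l1_mu) sign_change.
  have qx : q.[x] != 0 by apply: secular_le0; rewrite sec_x.
  exists x.
    by rewrite lt_neqAle x_mu andbT; apply: contraTneq sec_mu => <-; rewrite sec_x ltxx.
  have [Mx Px] := x_at_sol qx; exists (x_at x); split=> //.
  move: sec_x; rewrite secular_x_at // => /eqP.
  by rewrite mulf_eq0 (negPf (lt0r_neq0 (q2_gt0 _ qx))) subr_eq0 => /eqP.
have qmu := secular_le0 sec_mu; have [Mx Px] := x_at_sol qmu.
exists (x_at mu); split=> //.
by move: sec_mu; rewrite secular_x_at // pmulr_rle0 ?q2_gt0 // subr_le0.
Qed.

End Secular.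

Lemma lg_below_or_subsolution mu :
  (exists2 l0, l0 < mu & exists u, lg_feasible l0 u) \/ exists x0, subsolution mu x0.
Proof.
have [l1 [_ l1_E _]] := far_left_point mu.
have det_neq0 : \det shiftIX != 0.
  have : shiftI l1 \in unitmx.
    apply: contraT => /nonunitmx_ker [s s_neq0 /(shiftI_inj l1_E) s0].
    by rewrite s0 eqxx in s_neq0.
  rewrite unitmxE unitfE -shiftIX_eval det_map_mx; apply: contraNneq => ->.
  by rewrite rmorph0.
have adj_sol : shiftIX *m (\adj shiftIX *m map_mx polyC (- c)) =
    \det shiftIX *: map_mx polyC (- c).
  by rewrite mulmxA mul_mx_adj mul_scalar_mx.
have [w [q [_ Xw no_common]]] := reduce_common_roots det_neq0 adj_sol.
exact: secular_alternative Xw no_common mu.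
Qed.

Lemma lg_min_le_qep l u l' z :
  minimizing lg_feasible l u -> qep_feasible l' z -> l <= l'.
Proof.
move=> [_ u_min] z_feas; have [cz|cz] := eqVneq (dotv c z) 0; last first.
  exact: u_min _ _ (lg_of_qep z_feas cz).
have z_null := null_vec_of_qep z_feas cz.
have [[l0 l0_lt [u0 u0_feas]]|[x0 x0_sub]] := lg_below_or_subsolution l'.
  exact: le_trans (u_min _ _ u0_feas) (ltW l0_lt).
have [u1 u1_feas] := lg_of_subsolution x0_sub z_null; exact: u_min _ _ u1_feas.
Qed.

Lemma qep_min_of_lg_min l u z :
  minimizing lg_feasible l u -> qep_feasible l z -> minimizing qep_feasible l z.
Proof. by move=> u_min z_feas; split=> // l' z'; apply: lg_min_le_qep u_min. Qed.

Lemma lg_min_of_qep_min l z u :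
  minimizing qep_feasible l z -> lg_feasible l u -> minimizing lg_feasible l u.
Proof.
move=> [_ z_min] u_feas; split=> // l' u' /qep_of_lg [z' z'_feas].
exact: z_min z'_feas.
Qed.

Lemma qep_min_subsolution l z :
  minimizing qep_feasible l z -> exists x0, subsolution l x0.
Proof.
move=> [_ z_min].
have [[l0 l0_lt [u /qep_of_lg [z0 z0_feas]]]|//] := lg_below_or_subsolution l.
by have := z_min _ _ z0_feas; rewrite leNgt l0_lt.
Qed.

Lemma lg_min_of_qep_min_exists l z :
  minimizing qep_feasible l z -> exists u, minimizing lg_feasible l u.
Proof.
move=> z_min; have [z_feas _] := z_min.
suff [u u_feas] : exists u, lg_feasible l u.
  by exists u; apply: lg_min_of_qep_min z_min u_feas.
have [cz|cz] := eqVneq (dotv c z) 0; last by eexists; apply: lg_of_qep z_feas cz.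
have [x0 x0_sub] := qep_min_subsolution z_min.
exact: lg_of_subsolution x0_sub (null_vec_of_qep z_feas cz).
Qed.

(* [X (H - l)] is the orthogonal projector onto the complement of the kernel of
   [H - l], and that kernel is stable under [P]. *)
Lemma pinv_solution l X x : is_pinv (M l) X -> P *m (M l *m x) = M l *m x ->
  M l *m (X *m (M l *m x)) = M l *m x /\ P *m (X *m (M l *m x)) = X *m (M l *m x).
Proof.
move=> X_pinv PMx; set y := X *m _.
have My : M l *m y = M l *m x by case: X_pinv => MXM _ _ _; rewrite /y !mulmxA MXM.
split=> //; pose r := y - P *m y.
have Mr : M l *m r = 0.
  by rewrite mulmxBr [M l *m (P *m y)]mulmxA -shift_commP -mulmxA My PMx subrr.
have Pr : P *m r = 0 by rewrite mulmxBr [P *m (P *m y)]mulmxA P_idem subrr.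
have rr : dotv r r = 0.
  by rewrite {2}/r dotvDr dotvNr (pinv_orth_ker _ X_pinv Mr) dotv_mulmx P_sym Pr dotv0l subrr.
by apply/eqP; rewrite eq_sym -subr_eq0; apply/eqP/dotv_eq0.
Qed.

Lemma qep_of_lg_pinv l u X : lg_feasible l u -> is_pinv (M l) X ->
  ~ (exists s, null_vec l s) -> qep_feasible l (X *m u).
Proof.
move=> u_feas X_pinv no_null; have [/no_null[]|onto] := null_vec_or_onto l.
case: (u_feas) => _ _ Pu; have [z Pz Mz] := onto u Pu; rewrite -Mz in u_feas *.
have [MXu PXu] := pinv_solution X_pinv (shift_rangeP l Pz).
exact: qep_of_lg_preimage u_feas PXu MXu.
Qed.

Lemma lg_of_qep_min_pinv l z X :
  minimizing qep_feasible l z -> dotv c z = 0 -> is_pinv (M l) X ->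
  let x := - (X *m c) in
  vnorm x <= g /\
  lg_feasible l (x + (Num.sqrt (g ^+ 2 - vnorm x ^+ 2) / vnorm z) *: z).
Proof.
move=> z_min cz X_pinv x.
have [x0 [Mx0 Px0 x0x0]] := qep_min_subsolution z_min.
have [z_neq0 Pz Mz] := null_vec_of_qep (proj1 z_min) cz.
have x_eq : x = X *m (M l *m x0) by rewrite Mx0 mulmxN.
have [Mx Px] := pinv_solution X_pinv (shift_rangeP l Px0).
rewrite -x_eq Mx0 in Mx Px; clearbody x.
have xx : dotv x x <= dotv x0 x0.
  have Mx0x : M l *m (x0 - x) = 0 by rewrite mulmxBr Mx0 Mx subrr.
  have -> : x0 = x + (x0 - x) by rewrite addrC subrK.
  rewrite dotv_orthD ?lerDl ?dotv_ge0 //.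
  by rewrite dotvC {2}x_eq (pinv_orth_ker _ X_pinv Mx0x).
have x_sub : subsolution l x by split=> //; apply: le_trans xx x0x0.
rewrite vnorm_le ?(ltW g_gt0) // (vnorm_sq x); split; first by case: x_sub.
apply: lg_of_subsolution_orth x_sub _ _ => //.
by rewrite x_eq dotvC (pinv_orth_ker _ X_pinv Mz).
Qed.
End Compressed.

Section Reduction.
Variables (R : rcfType) (n m : nat) (A : 'M[R]_n) (C : 'M[R]_(n, m)) (b : 'cV[R]_m).
Hypotheses (A_sym : A^T = A) (rankC : \rank C = m) (n0_lt1 : vnorm (n0v C b) < 1).

Local Notation P := (Pmx C).
Local Notation H := (PAP A C).

Lemma CtC_unit : C^T *m C \in unitmx.
Proof.
apply: contraT => /nonunitmx_ker [s s_neq0 CtCs].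
have /row_fullP [B BC] : row_full C by rewrite /row_full rankC.
have Cs : C *m s = 0.
  by apply: dotv_eq0; rewrite /dotv trmx_mul -mulmxA (mulmxA C^T) CtCs mulmx0 mxE.
by move: s_neq0; rewrite -[s]mul1mx -BC -mulmxA Cs mulmx0 eqxx.
Qed.

Lemma Pmx_sym : P^T = P.
Proof.
by rewrite /Pmx linearB /= trmx1 !trmx_mul trmxK trmx_inv trmx_mul trmxK mulmxA.
Qed.

Lemma CtPmx : C^T *m P = 0.
Proof. by rewrite /Pmx mulmxBr mulmx1 !mulmxA mulmxV ?CtC_unit // mul1mx subrr. Qed.

Lemma inNullP u : inNull C u <-> P *m u = u.
Proof.
split=> [Ctu|<-]; last by rewrite /inNull mulmxA CtPmx mul0mx.
by rewrite /Pmx mulmxBl mul1mx -!mulmxA Ctu !mulmx0 subr0.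
Qed.

Lemma gam_gt0 : 0 < gam C b.
Proof.
rewrite sqrtr_gt0 subr_gt0 expr2; have := sqrtr_ge0 (dotv (n0v C b) (n0v C b)).
rewrite -/(vnorm _); move: n0_lt1; nra.
Qed.

Lemma PAP_sym : H^T = H.
Proof. by rewrite /PAP !trmx_mul Pmx_sym A_sym mulmxA. Qed.

Lemma compressed_PAP : compressed H P (b0v A C b) (gam C b).
Proof.
have P_idem : P *m P = P by rewrite {1}/Pmx mulmxBl mul1mx -!mulmxA CtPmx !mulmx0 subr0.
split; [exact: PAP_sym | exact: Pmx_sym | exact: P_idem | | | exact: gam_gt0].
- by rewrite /PAP !mulmxA P_idem.
- by rewrite /b0v -!mulmxA mulmxA P_idem.
Qed.

Lemma LG_feasibleE l u :
  LG_feasible A C b l u <-> lg_feasible H P (b0v A C b) (gam C b) l u.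
Proof.
have uu_iff := vnorm_eq u (ltW gam_gt0).
by split=> -[Mu /uu_iff uu /inNullP Pu]; split=> //; apply/uu_iff.
Qed.

Lemma QEP_feasibleE l z :
  QEP_feasible A C b l z <-> qep_feasible H P (b0v A C b) (gam C b) l z.
Proof. by split=> -[z_neq0 /inNullP Pz MMz]. Qed.

Lemma null_vec_of_eigvec l s :
  is_eigvec H l s -> inNull C s -> null_vec H P l s.
Proof.
move=> [s_neq0 Hs] /inNullP Ps; split=> //.
by rewrite mulmxBl Hs mul_scalar_mx subrr.
Qed.

Lemma no_null_vec l :
  ~~ eigenvalue H l \/ (eigenvalue H l /\ ~ (exists s, is_eigvec H l s /\ inNull C s)) ->
  ~ exists s, null_vec H P l s.
Proof.
move=> no_eig [s [s_neq0 /inNullP Ps Ms]].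
have Hs : H *m s = l *: s by apply/eqP; rewrite -subr_eq0 -mul_scalar_mx -mulmxBl Ms.
case: no_eig => [/eigenvalueP|[_]]; apply; last by exists s.
exists s^T; last by rewrite trmx_eq0.
by rewrite -PAP_sym -trmx_mul Hs linearZ.
Qed.
End Reduction.

Theorem theorem2p8 (R : rcfType) (n m : nat) (A : 'M[R]_n) (C : 'M[R]_(n, m))
    (b : 'cV[R]_m) :
  A^T = A ->
  (m < n)%N ->
  \rank C = m ->
  vnorm (n0v C b) < 1 ->
  b0v A C b != 0 ->
  (* Part (1) *)
  (forall (l : R) (u : 'cV[R]_n), LG_minimizer A C b l u ->
     (exists z, QEP_minimizer A C b l z) /\
     (forall Mdag : 'M[R]_n, is_pinv (shiftM A C l) Mdag ->
        (~~ eigenvalue (PAP A C) l \/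
         (eigenvalue (PAP A C) l /\
          ~ (exists s, is_eigvec (PAP A C) l s /\ inNull C s))) ->
        QEP_minimizer A C b l (Mdag *m u)) /\
     (forall s : 'cV[R]_n, eigenvalue (PAP A C) l ->
        is_eigvec (PAP A C) l s -> inNull C s ->
        QEP_minimizer A C b l s)) /\
  (* Part (2) *)
  (forall (l : R) (z : 'cV[R]_n), QEP_minimizer A C b l z ->
     (exists u, LG_minimizer A C b l u) /\
     (dotv (b0v A C b) z != 0 ->
        LG_minimizer A C b l
          ((- (gam C b ^+ 2 / dotv (b0v A C b) z)) *: (shiftM A C l *m z))) /\
     (dotv (b0v A C b) z = 0 ->
        forall Mdag : 'M[R]_n, is_pinv (shiftM A C l) Mdag ->
        let x := - (Mdag *m b0v A C b) in
        vnorm x <= gam C b /\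
        LG_minimizer A C b l
          (x + (Num.sqrt (gam C b ^+ 2 - vnorm x ^+ 2) / vnorm z) *: z))).
Proof.
move=> A_sym _ rankC n0_lt1 _.
have data := compressed_PAP A_sym rankC n0_lt1.
pose lg := lg_feasible (PAP A C) (Pmx C) (b0v A C b) (gam C b).
pose qep := qep_feasible (PAP A C) (Pmx C) (b0v A C b) (gam C b).
have LGE l u : LG_minimizer A C b l u <-> minimizing lg l u.
  exact: minimizing_iff (LG_feasibleE A rankC n0_lt1).
have QEPE l z : QEP_minimizer A C b l z <-> minimizing qep l z.
  exact: minimizing_iff (QEP_feasibleE A b rankC).
split=> [l u /LGE u_min | l z /QEPE z_min].
  have [u_feas _] := u_min.
  have qep_min z : qep l z -> QEP_minimizer A C b l z.
    by move=> z_feas; apply/(iffRL (QEPE l z))/(qep_min_of_lg_min data u_min z_feas).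
  split; [|split].
  - by have [z /qep_min] := qep_of_lg data u_feas; exists z.
  - move=> X X_pinv /(no_null_vec A_sym rankC) no_null.
    exact: qep_min (qep_of_lg_pinv data u_feas X_pinv no_null).
  - move=> s _ s_eig /(null_vec_of_eigvec rankC s_eig) s_null.
    exact: qep_min (qep_of_null_vec data u_feas s_null).
have lg_min u : lg l u -> LG_minimizer A C b l u.
  by move=> u_feas; apply/(iffRL (LGE l u))/(lg_min_of_qep_min data z_min u_feas).
split; [|split].
- have [u u_min] := lg_min_of_qep_min_exists data z_min.
  by exists u; apply/(iffRL (LGE l u)).
- by move=> cz; exact: lg_min (lg_of_qep data (proj1 z_min) cz).
- move=> cz X X_pinv; have [x_le x_feas] := lg_of_qep_min_pinv data z_min cz X_pinv.
  by split=> //; apply: lg_min.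
Qed.
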